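(* For all $d\ge1$, $\alpha>1$, positive weights $\boldsymbol\gamma=\{\gamma_u\}$ with $\gamma_\emptyset=1$, and $M>0$, the index set $\mathcal A_d(M)$ satisfies $$|\mathcal A_d(M)|\le M^q\,C_{1,d,q,\alpha,\boldsymbol\gamma}\qquad\text{for all }q>\tfrac1\alpha,\qquad C_{1,d,q,\alpha,\boldsymbol\gamma}:=\sum_{u\subseteq\{1:d\}}\gamma_u^q[2\zeta(\alpha q)]^{|u|}.$$ Moreover, if $M\ge1$ then $|\mathcal A_d(M)|\ge(\gamma_{\{1\}}M)^{1/\alpha}$.
   Context: $\{1:d\}=\{1,\ldots,d\}$; $\zeta$ is the Riemann zeta function. Weights $\gamma_u>0$ for finite $u\subset\mathbb N$, $\gamma_\emptyset=1$. For $\mathbf h\in\mathbb Z^d$, $\mathrm{supp}(\mathbf h)=\{j:h_j\ne0\}$, $r(\mathbf h)=\gamma_{\mathrm{supp}(\mathbf h)}^{-1}\prod_{j\in\mathrm{supp}(\mathbf h)}|h_j|^\alpha$ (so $r(\mathbf0)=1$), and $\mathcal A_d(M)=\{\mathbf h\in\mathbb Z^d:r(\mathbf h)\le M\}$. *)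

From HB Require Import structures.
From mathcomp Require Import all_boot all_order all_algebra finmap.
From mathcomp Require Import all_classical all_reals all_analysis.
Set Implicit Arguments. Unset Strict Implicit. Unset Printing Implicit Defensive.
Import Order.TTheory GRing.Theory Num.Theory.
Local Open Scope classical_set_scope.
Local Open Scope ring_scope.

(* Riemann zeta function for real s (meaningful for s > 1):
   zeta s = sum_{n >= 1} n^{-s}. *)
Definition zeta (R : realType) (s : R) : R :=
  limn (fun N : nat => \sum_(1 <= n < N) ((n%:R : R) `^ (- s))).

(* Coordinates j : 'I_d (0-based) correspond to the paper's coordinates j+1. *)
Definition shiftset (d : nat) (u : {set 'I_d}) : {fset nat} :=
  [fset (val j).+1 | j in enum u]%fset.

Definition supp (d : nat) (h : {ffun 'I_d -> int}) : {fset nat} :=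
  shiftset [set j | h j != 0%R].

Definition rfun (R : realType) (d : nat) (alpha : R) (gamma : {fset nat} -> R)
  (h : {ffun 'I_d -> int}) : R :=
  (gamma (supp h))^-1 * \prod_(j : 'I_d | h j != 0%R) ((`|h j|%:~R : R) `^ alpha).

Definition Aset (R : realType) (d : nat) (alpha : R) (gamma : {fset nat} -> R)
  (M : R) : set {ffun 'I_d -> int} :=
  [set h | rfun alpha gamma h <= M].

Definition C1 (R : realType) (d : nat) (q alpha : R) (gamma : {fset nat} -> R) : R :=
  \sum_(u : {set 'I_d}) (gamma (shiftset u) `^ q * (2 * zeta (alpha * q)) ^+ #|u|).

Arguments Aset {R} d alpha gamma M.
Arguments C1 {R} d q alpha gamma.
Arguments rfun {R} d alpha gamma h.

(* Every h in A_d(M) satisfies 1 <= (M gamma_{supp h} / prod_{j in supp h} |h_j|^alpha)^q for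
   q > 0, so |A_d(M)| is at most M^q times the sum over all h of
   gamma_{supp h}^q prod_{j in supp h} |h_j|^(-alpha q).  Grouped by support, that sum factorizes
   into sum_u gamma_u^q (2 zeta(alpha q))^|u|, and zeta(alpha q) is finite for alpha q > 1 by
   comparing dyadic blocks with a geometric series.  To stay with finite sums, A_d(M) is put in a
   box of integer vectors encoded coordinatewise by sign and absolute value.
   For the lower bound, the points k e_1 with 0 <= k <= (gamma_{1} M)^(1/alpha) all lie in
   A_d(M). *)

Set Warnings "-notation-overridden,-notation-incompatible-prefix,-ambiguous-paths,-deprecated".
From HB Require Import structures.
From mathcomp Require Import all_boot all_order all_algebra finmap.
From mathcomp Require Import all_classical all_reals all_analysis.
Set Implicit Arguments. Unset Strict Implicit. Unset Printing Implicit Defensive.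
Import Order.TTheory GRing.Theory Num.Theory.
Local Open Scope classical_set_scope.
Local Open Scope ring_scope.

Lemma powR_lt1 (R : realType) (a r : R) : 1 < a -> r < 0 -> a `^ r < 1.
Proof.
move=> a_gt1 r_lt0; rewrite lt_neqAle; apply/andP; split.
  by rewrite powR_eq1 (gt_eqF a_gt1) ltNge (ltW (lt_trans ltr01 a_gt1)) (lt_eqF r_lt0).
by rewrite -(powRr0 a) ler_powR ?ltW.
Qed.

Lemma powR_prod (R : realType) (I : finType) (P : pred I) (F : I -> R) (a : R) :
  (forall i, P i -> 0 <= F i) ->
  (\prod_(i | P i) F i) `^ a = \prod_(i | P i) F i `^ a.
Proof.
move=> F_ge0; suff [] : 0 <= \prod_(i | P i) F i /\
    (\prod_(i | P i) F i) `^ a = \prod_(i | P i) F i `^ a by [].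
apply: (big_rec2 (fun x y => 0 <= x /\ x `^ a = y)) => [|i x y Pi [x_ge0 <-]].
  by rewrite powR1.
by split; [rewrite mulr_ge0 ?F_ge0 | rewrite powRM ?F_ge0].
Qed.

Section ZetaPartialSums.
Variable R : realType.
Implicit Types s : R.

Definition zeta_partial s (N : nat) : R := \sum_(1 <= n < N) n%:R `^ (- s).

Lemma zeta_partial_nondecreasing s : nondecreasing_seq (zeta_partial s).
Proof.
move=> [|m] n le_mn; rewrite /zeta_partial.
  by rewrite big_geq // sumr_ge0 // => i _; exact: powR_ge0.
by rewrite [leRHS](@big_cat_nat _ _ _ m.+1) //= lerDl sumr_ge0 // => i _; exact: powR_ge0.
Qed.

(* The [2^k] terms of the k-th dyadic block are each at most [(2^k)^(-s)]. *)
Lemma dyadic_block_le s k : 0 <= s ->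
  \sum_(2 ^ k <= n < 2 ^ k.+1) n%:R `^ (- s) <= (2 `^ (1 - s)) ^+ k.
Proof.
move=> s_ge0; have pow2_gt0 : (0 < 2 ^ k)%N by rewrite expn_gt0.
apply: (@le_trans _ _ (\sum_(2 ^ k <= n < 2 ^ k.+1) (2 ^ k)%:R `^ (- s))).
  rewrite big_nat_cond [leRHS]big_nat_cond; apply: ler_sum => n /andP[/andP[le_kn _] _].
  have n_gt0 : (0 < n)%N := leq_trans pow2_gt0 le_kn.
  rewrite !powRN lef_pV2 ?posrE ?powR_gt0 ?ltr0n //.
  by rewrite ge0_ler_powR ?nnegrE ?ler0n ?ler_nat.
rewrite sumr_const_nat expnS mul2n -addnn addnK -(mulr_natl (_ `^ (- s))).
have pow2E : (2 ^ k)%:R = 2 `^ k%:R :> R by rewrite natrX powR_mulrn.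
rewrite pow2E -powRrM -(powR_mulrn _ (powR_ge0 _ _)) -!powRrM -powRD ?pnatr_eq0 ?implybT //.
by rewrite mulrN [_ * k%:R]mulrC mulrBr mulr1.
Qed.

Lemma zeta_partial_pow2 s k : 0 <= s ->
  zeta_partial s (2 ^ k) <= series (geometric 1 (2 `^ (1 - s))) k.
Proof.
move=> s_ge0; elim: k => [|k IHk].
  by rewrite /zeta_partial big_geq // seriesEnat /= big_geq.
rewrite /zeta_partial (@big_cat_nat _ _ _ (2 ^ k)) ?expn_gt0 ?leq_exp2l //=.
by rewrite seriesSr /= mul1r lerD // dyadic_block_le.
Qed.

Lemma zeta_partial_le_zeta s N : 1 < s -> zeta_partial s N <= zeta s.
Proof.
move=> s_gt1; set c := 2 `^ (1 - s).
have c_gt0 : 0 < c by rewrite powR_gt0.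
have c_lt1 : c < 1 by rewrite powR_lt1 ?ltr1n // subr_lt0.
have bounded n : zeta_partial s n <= 1 * (1 - c)^-1.
  apply: (le_trans (zeta_partial_nondecreasing s (ltnW (ltn_expl n (ltnSn 1))))).
  apply: (le_trans (zeta_partial_pow2 n (ltW (lt_trans ltr01 s_gt1)))).
  by rewrite geometric_le_lim // gtr0_norm.
apply: nondecreasing_cvgn_le; first exact: zeta_partial_nondecreasing.
apply: nondecreasing_is_cvgn; first exact: zeta_partial_nondecreasing.
by exists (1 * (1 - c)^-1) => _ [n _ <-]; exact: bounded.
Qed.

Lemma zeta_ge0 s : 1 < s -> 0 <= zeta s.
Proof. by move=> s_gt1; have := zeta_partial_le_zeta 0 s_gt1; rewrite /zeta_partial big_geq. Qed.

Lemma sum_powRN_le_zeta s K : 1 < s -> \sum_(i < K) i%:R `^ (- s) <= zeta s.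
Proof.
move=> s_gt1; apply: le_trans (zeta_partial_le_zeta K s_gt1).
case: K => [|K]; first by rewrite big_ord0 /zeta_partial big_geq.
rewrite big_ord_recl /= powR0 ?oppr_eq0 ?gt_eqF ?(lt_trans ltr01) // add0r.
by rewrite /zeta_partial big_add1 big_mkord; exact: lexx.
Qed.

End ZetaPartialSums.

Lemma prodr_ge1 (R : numDomainType) (I : Type) (r : seq I) (P : pred I) (F : I -> R) :
  (forall i, P i -> 1 <= F i) -> 1 <= \prod_(i <- r | P i) F i.
Proof. by move=> F_ge1; apply: (big_ind (fun x => 1 <= x)) => //; exact: mulr_ege1. Qed.

Lemma sum_inj_le_sum (R : numDomainType) (T : eqType) (U : finType) (s : seq T)
    (f : T -> U) (F : U -> R) :
  uniq s -> {in s &, injective f} -> (forall y, 0 <= F y) ->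
  \sum_(x <- s) F (f x) <= \sum_y F y.
Proof.
move=> s_uniq f_inj F_ge0; rewrite -(big_map f xpredT F) big_uniq ?map_inj_in_uniq //=.
by rewrite big_mkcond ler_sum // => y _; case: ifP.
Qed.

Section ProdAbsPowR.
Variables (R : realType) (d : nat).
Implicit Types (a b : R) (h : {ffun 'I_d -> int}).

Definition prod_abs_powR a h : R := \prod_(j | h j != 0) (`|h j|%:~R : R) `^ a.

Lemma rfunE alpha gamma h : rfun d alpha gamma h = (gamma (supp h))^-1 * prod_abs_powR alpha h.
Proof. by []. Qed.

Lemma abs_powR_ge1 a (k : int) : 0 <= a -> k != 0 -> 1 <= (`|k|%:~R : R) `^ a.
Proof.
move=> a_ge0 k_neq0; have one_powR : 1 `^ a = 1 :> R by rewrite powR1.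
rewrite -{1}one_powR ge0_ler_powR ?nnegrE //.
by rewrite -natr_absz ler1n absz_gt0.
Qed.

Lemma prod_abs_powR_ge1 a h : 0 <= a -> 1 <= prod_abs_powR a h.
Proof. by move=> a_ge0; apply: prodr_ge1 => j; exact: abs_powR_ge1. Qed.

Lemma abs_le_prod_abs_powR a h j : 1 <= a -> (`|h j|%:R : R) <= prod_abs_powR a h.
Proof.
move=> a_ge1; have a_ge0 := le_trans ler01 a_ge1.
have [->|hj_neq0] := eqVneq (h j) 0.
  exact: le_trans ler01 (prod_abs_powR_ge1 h a_ge0).
rewrite /prod_abs_powR (bigD1 j) //= natr_absz -[leLHS]mulr1 ler_pM ?ler0z //.
- by rewrite -natr_absz le1r_powR // ler1n absz_gt0.
- by apply: prodr_ge1 => i /andP[hi_neq0 _]; exact: abs_powR_ge1.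
Qed.

Lemma prod_abs_powRN a h : prod_abs_powR (- a) h = (prod_abs_powR a h)^-1.
Proof. by rewrite /prod_abs_powR -prodfV; under eq_bigr do rewrite powRN. Qed.

Lemma prod_abs_powRM a b h : prod_abs_powR (a * b) h = prod_abs_powR a h `^ b.
Proof.
rewrite /prod_abs_powR powR_prod => [|j _]; last exact: powR_ge0.
by under eq_bigr do rewrite powRrM.
Qed.

End ProdAbsPowR.

Section SignAbsEncoding.
Variables d K : nat.

Definition int_of_signabs (p : bool * 'I_K.+1) : int :=
  if p.1 then (p.2 : nat)%:Z else - (p.2 : nat)%:Z.

Definition signabs_of_int (k : int) : bool * 'I_K.+1 := (0 <= k, inord `|k|%N).

Lemma signabs_of_intK k : (`|k| <= K)%N -> int_of_signabs (signabs_of_int k) = k.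
Proof.
move=> le_kK; rewrite /int_of_signabs /= inordK ?ltnS //.
by case: (lerP 0 k) => [k_ge0|k_lt0]; [rewrite gez0_abs | rewrite ltz0_abs ?opprK].
Qed.

Definition decode (g : {ffun 'I_d -> bool * 'I_K.+1}) : {ffun 'I_d -> int} :=
  [ffun j => int_of_signabs (g j)].

Definition encode (h : {ffun 'I_d -> int}) : {ffun 'I_d -> bool * 'I_K.+1} :=
  [ffun j => signabs_of_int (h j)].

Lemma encodeK (h : {ffun 'I_d -> int}) : (forall j, `|h j| <= K)%N -> decode (encode h) = h.
Proof. by move=> h_le; apply/ffunP => j; rewrite !ffunE signabs_of_intK. Qed.

End SignAbsEncoding.

Arguments decode {d K} g.

Section BoxWeight.
Variables (R : realType) (d K : nat) (gamma : {fset nat} -> R) (s q : R).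

(* Summed over the box, [\prod_j coord_weight u j (g j)] factorizes coordinatewise: the sign
   bit doubles the sum for [j \in u], and for [j \notin u] only the code [(true, 0)] of [0]
   counts. *)
Definition coord_weight (u : {set 'I_d}) (j : 'I_d) (p : bool * 'I_K.+1) : R :=
  if j \in u then (p.2 : nat)%:R `^ (- s) else (p == (true, ord0))%:R.

Definition box_weight (g : {ffun 'I_d -> bool * 'I_K.+1}) : R :=
  \sum_(u : {set 'I_d}) gamma (shiftset u) `^ q * \prod_j coord_weight u j (g j).

Lemma coord_weight_ge0 u j p : 0 <= coord_weight u j p.
Proof. by rewrite /coord_weight; case: ifP => _; rewrite ?powR_ge0 ?ler0n. Qed.

Lemma box_term_ge0 u g : 0 <= gamma (shiftset u) `^ q * \prod_j coord_weight u j (g j).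
Proof. by rewrite mulr_ge0 ?powR_ge0 // prodr_ge0 // => j _; exact: coord_weight_ge0. Qed.

Lemma box_weight_ge0 g : 0 <= box_weight g.
Proof. by rewrite sumr_ge0 // => u _; exact: box_term_ge0. Qed.

Lemma sum_coord_weight u j :
  \sum_p coord_weight u j p = if j \in u then 2 * \sum_(i < K.+1) i%:R `^ (- s) else 1.
Proof.
rewrite /coord_weight; case: ifP => _.
  rewrite -(pair_bigA _ (fun _ (i : 'I_K.+1) => (i : nat)%:R `^ (- s))) /= big_bool.
  by rewrite mulr_natl mulr2n.
by rewrite (bigD1 (true, ord0)) //= big1 ?addr0 // => p /negbTE ->.
Qed.

Lemma sum_box_weight :
  \sum_g box_weight g =
  \sum_(u : {set 'I_d}) gamma (shiftset u) `^ q * (2 * \sum_(i < K.+1) i%:R `^ (- s)) ^+ #|u|.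
Proof.
rewrite exchange_big /=; apply: eq_bigr => u _; rewrite -mulr_sumr; congr (_ * _).
rewrite -bigA_distr_bigA /=.
under eq_bigr do rewrite sum_coord_weight.
by rewrite -big_mkcond /= prodr_const; congr (_ ^+ _); apply: eq_card.
Qed.

Definition weight (h : {ffun 'I_d -> int}) : R := gamma (supp h) `^ q * prod_abs_powR (- s) h.

Lemma weight_le_box_weight (h : {ffun 'I_d -> int}) : (forall j, `|h j| <= K)%N ->
  weight h <= box_weight (encode K h).
Proof.
move=> h_le; set u := [set j | h j != 0]%SET.
have prodE : \prod_j coord_weight u j (encode K h j) = prod_abs_powR (- s) h.
  rewrite [RHS]big_mkcond; apply: eq_bigr => j _.
  rewrite /coord_weight ffunE inE /signabs_of_int /=.
  have [->|hj_neq0] := eqVneq (h j) 0; last by rewrite inordK ?ltnS // natr_absz.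
  by have -> : inord 0 = ord0 :> 'I_K.+1 by apply/val_inj; rewrite /= inordK.
rewrite /box_weight (bigD1 u) //= prodE /weight /supp lerDl.
by rewrite sumr_ge0 // => v _; exact: box_term_ge0.
Qed.

End BoxWeight.

Section Axis.
Variable d : nat.

Definition axis (j : 'I_d) (k : nat) : {ffun 'I_d -> int} :=
  [ffun i => if i == j then k%:Z else 0].

Lemma axis_inj j : injective (axis j).
Proof. by move=> k1 k2 /ffunP /(_ j); rewrite !ffunE eqxx => -[]. Qed.

Lemma shiftset0 : shiftset (finset.set0 : {set 'I_d}) = fset0.
Proof. by apply/fsetP => x; rewrite /shiftset enum_set0 inE; apply/imfsetP => -[]. Qed.

Lemma shiftset1 (j : 'I_d) : shiftset [set j]%SET = [fset (val j).+1]%fset.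
Proof.
apply/fsetP => x; rewrite /shiftset enum_set1 !inE.
by apply/imfsetP/eqP => [[i]|->]; [rewrite inE => /eqP -> | exists j; rewrite ?inE].
Qed.

Lemma supp_axis j k : supp (axis j k) = if k == 0%N then fset0 else [fset (val j).+1]%fset.
Proof.
rewrite /supp -shiftset0 -shiftset1; case: eqP => [->|/eqP k_neq0]; congr shiftset;
  by apply/setP => i; rewrite !inE ffunE; case: (i == j).
Qed.

Lemma prod_abs_powR_axis (R : realType) (a : R) j k :
  prod_abs_powR a (axis j k) = if k == 0%N then 1 else k%:R `^ a.
Proof.
rewrite /prod_abs_powR; case: eqP => [->|/eqP k_neq0].
  by rewrite big1 // => i; rewrite ffunE; case: (i == j).
rewrite (bigD1 j) ?ffunE ?eqxx //= big1 ?mulr1 => [|i].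
  by rewrite -natr_absz absz_nat.
by rewrite ffunE; case: (i == j); rewrite ?andbF.
Qed.

End Axis.

Section IndexSet.
Variables (R : realType) (d : nat) (alpha : R) (gamma : {fset nat} -> R).
Hypothesis gamma_gt0 : forall u, 0 < gamma u.
Implicit Types (M : R) (h : {ffun 'I_d -> int}).

Lemma in_AsetE M h : Aset d alpha gamma M h = (prod_abs_powR alpha h <= M * gamma (supp h)).
Proof. by rewrite /Aset /= rfunE ler_pdivrMl // mulrC. Qed.

Definition gamma_sum : R := \sum_(u : {set 'I_d}) gamma (shiftset u).

Lemma gamma_supp_le_sum h : gamma (supp h) <= gamma_sum.
Proof.
rewrite /gamma_sum (bigD1 [set j | h j != 0]%SET) //= lerDl.
by rewrite sumr_ge0 // => u _; exact: ltW.
Qed.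

Lemma Aset_abs_le M h j : 0 < M -> 1 <= alpha -> Aset d alpha gamma M h ->
  (`|h j| <= Num.truncn (M * gamma_sum))%N.
Proof.
move=> M_gt0 alpha_ge1; rewrite in_AsetE => le_prod.
have le_bound : M * gamma (supp h) <= M * gamma_sum.
  by rewrite ler_wpM2l ?(ltW M_gt0) ?gamma_supp_le_sum.
rewrite truncn_ge_nat; last exact: le_trans (ltW (mulr_gt0 M_gt0 (gamma_gt0 _))) le_bound.
exact: le_trans (abs_le_prod_abs_powR h j alpha_ge1) (le_trans le_prod le_bound).
Qed.

Lemma Aset_finite M : 0 < M -> 1 <= alpha -> finite_set (Aset d alpha gamma M).
Proof.
move=> M_gt0 alpha_ge1; set K := Num.truncn (M * gamma_sum).
apply: (@sub_finite_set _ _ [set decode g | g in [set: {ffun 'I_d -> bool * 'I_K.+1}]]).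
  move=> h hA; exists (encode K h) => //; apply: encodeK => j.
  exact: Aset_abs_le.
exact: finite_image.
Qed.

Lemma sum_box_weight_le_C1 K q : 1 < alpha * q ->
  \sum_(g : {ffun 'I_d -> bool * 'I_K.+1}) box_weight gamma (alpha * q) q g <= C1 d q alpha gamma.
Proof.
move=> s_gt1; rewrite sum_box_weight; apply: ler_sum => u _.
rewrite ler_wpM2l ?powR_ge0 // lerXn2r ?nnegrE ?mulr_ge0 ?sumr_ge0 ?zeta_ge0 //.
by rewrite ler_pM2l // sum_powRN_le_zeta.
Qed.

Lemma one_le_weight M q h : 0 <= alpha -> 0 < M -> 0 <= q -> Aset d alpha gamma M h ->
  1 <= M `^ q * weight gamma (alpha * q) q h.
Proof.
move=> alpha_ge0 M_gt0 q_ge0; rewrite in_AsetE => le_prod.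
have P_gt0 : 0 < prod_abs_powR alpha h := lt_le_trans ltr01 (prod_abs_powR_ge1 h alpha_ge0).
rewrite /weight prod_abs_powRN prod_abs_powRM mulrA -powRM ?(ltW M_gt0) ?(ltW (gamma_gt0 _)) //.
rewrite ler_pdivlMr ?powR_gt0 // mul1r ge0_ler_powR ?nnegrE ?(ltW P_gt0) //.
by rewrite mulr_ge0 ?(ltW M_gt0) ?(ltW (gamma_gt0 _)).
Qed.

Lemma card_Aset_le M q : 1 <= alpha -> 0 < M -> alpha^-1 < q ->
  (#|` fset_set (Aset d alpha gamma M)|%:R : R) <= M `^ q * C1 d q alpha gamma.
Proof.
move=> alpha_ge1 M_gt0 lt_q; have alpha_gt0 := lt_le_trans ltr01 alpha_ge1.
have q_gt0 : 0 < q by apply: lt_trans lt_q; rewrite invr_gt0.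
have s_gt1 : 1 < alpha * q by rewrite -(mulfV (lt0r_neq0 alpha_gt0)) ltr_pM2l.
set S := fset_set _; set K := Num.truncn (M * gamma_sum).
have inS h : h \in S -> Aset d alpha gamma M h.
  by rewrite in_fset_set ?inE //; exact: Aset_finite.
have encodeK_S : {in S, cancel (encode K) decode}.
  by move=> h /inS hA; apply: encodeK => j; exact: Aset_abs_le.
rewrite card_fset_sum1 natr_sum.
apply: (@le_trans _ _ (\sum_(h <- S) M `^ q * weight gamma (alpha * q) q h)).
  rewrite big_seq_cond [leRHS]big_seq_cond ler_sum // => h /andP[/inS hA _].
  exact: one_le_weight (ltW alpha_gt0) M_gt0 (ltW q_gt0) hA.
rewrite -mulr_sumr ler_wpM2l ?powR_ge0 //.
apply: le_trans (sum_box_weight_le_C1 K s_gt1).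
apply: le_trans (sum_inj_le_sum (fset_uniq S) (can_in_inj encodeK_S) (box_weight_ge0 _ _ _)).
rewrite big_seq_cond [leRHS]big_seq_cond ler_sum // => h /andP[hS _].
by apply: weight_le_box_weight => j; exact: Aset_abs_le (inS _ hS).
Qed.

Lemma axis_in_Aset M j k : gamma fset0 = 1 -> 1 <= M ->
  k%:R `^ alpha <= M * gamma [fset (val j).+1]%fset -> Aset d alpha gamma M (axis j k).
Proof.
move=> gamma0 M_ge1 le_k; rewrite in_AsetE supp_axis prod_abs_powR_axis.
by case: eqP; rewrite ?gamma0 ?mulr1.
Qed.

Lemma card_Aset_ge M : (0 < d)%N -> 1 <= alpha -> gamma fset0 = 1 -> 1 <= M ->
  (gamma [fset 1%N]%fset * M) `^ (alpha^-1) <= (#|` fset_set (Aset d alpha gamma M)|%:R : R).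
Proof.
move=> d_gt0 alpha_ge1 gamma0 M_ge1; have M_gt0 := lt_le_trans ltr01 M_ge1.
have alpha_gt0 := lt_le_trans ltr01 alpha_ge1.
set X := _ `^ _; set m := Num.truncn X; pose j0 : 'I_d := Ordinal d_gt0.
have X_ge0 : 0 <= X := powR_ge0 _ _.
have sub_S : {subset map (axis j0) (iota 0 m.+1) <= fset_set (Aset d alpha gamma M)}.
  move=> h /mapP[k]; rewrite mem_iota ltnS => /andP[_ le_km] ->.
  rewrite in_fset_set ?inE; last exact: Aset_finite.
  apply: axis_in_Aset => //; rewrite mulrC.
  have le_kX : k%:R <= X by rewrite -truncn_ge_nat.
  apply: le_trans (ge0_ler_powR (ltW alpha_gt0) _ _ le_kX) _; rewrite ?nnegrE //.
  by rewrite -powRrM mulVf ?gt_eqF // powRr1 // mulr_ge0 ?(ltW M_gt0) ?(ltW (gamma_gt0 _)).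
have axis_uniq : uniq (map (axis j0) (iota 0 m.+1)).
  by rewrite map_inj_uniq ?iota_uniq //; exact: axis_inj.
have := uniq_leq_size axis_uniq sub_S; rewrite size_map size_iota => le_card.
by apply: le_trans (ltW (truncnS_gt X)) _; rewrite ler_nat.
Qed.

End IndexSet.

Theorem lemma5 (R : realType) (d : nat) (alpha : R) (gamma : {fset nat} -> R) (M : R) :
  (0 < d)%N -> 1 < alpha ->
  (forall u : {fset nat}, 0 < gamma u) -> gamma fset0 = 1 ->
  0 < M ->
  finite_set (Aset d alpha gamma M) /\
  (forall q : R, alpha^-1 < q ->
     (#|` fset_set (Aset d alpha gamma M)|%:R : R) <= M `^ q * C1 d q alpha gamma) /\
  (1 <= M ->
     (gamma [fset 1%N]%fset * M) `^ (alpha^-1) <= (#|` fset_set (Aset d alpha gamma M)|%:R : R)).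
Proof.
move=> d_gt0 alpha_gt1 gamma_gt0 gamma0 M_gt0; have alpha_ge1 := ltW alpha_gt1.
split; first exact: Aset_finite.
split; first by move=> q; exact: card_Aset_le.
by move=> M_ge1; exact: card_Aset_ge.
Qed.
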